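(* Let $H$ be a Hilbert space and $U_{ik}\in B(H)$, $i,k=1,\dots,n$, operators satisfying relations (R1)–(R5). Then for all $i,j,k,l$ with $i\neq j$ and $k\neq l$, $$U_{ik}^*U_{jl}=\omega_{ij}\omega_{lk}U_{jl}U_{ik}^*.$$
   Context: $n\ge2$, $\theta\in M_n(\mathbb R)$ skew-symmetric, $\omega_{ij}=e^{2\pi i\theta_{ij}}$. Relations, for all $i,j,k,l\in\{1,\dots,n\}$: (R1) $U_{ik}U_{jl}+\omega_{ji}U_{jk}U_{il}=\omega_{kl}U_{il}U_{jk}+\omega_{ji}\omega_{kl}U_{jl}U_{ik}$; (R2) $\sum_iU_{ik}U_{il}^*=\delta_{kl}1$; (R3) $\sum_iU_{il}^*U_{ik}=\delta_{kl}1$; (R4) $U_{jk}U_{ik}^*=0$ for $i\neq j$; (R5) $U_{ik}^*U_{jk}=0$ for $i\neq j$. *)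

From HB Require Import structures.
From mathcomp Require Import all_boot all_order all_algebra.
From mathcomp Require Import complex.
From mathcomp Require Import all_classical all_reals all_analysis.
Set Implicit Arguments. Unset Strict Implicit. Unset Printing Implicit Defensive.
Import Order.TTheory GRing.Theory Num.Theory.
Local Open Scope ring_scope.
Local Open Scope complex_scope.

(* omega_{ij} = e^{2 pi i theta_{ij}}, written out as cos + i sin *)
Definition omega (R : realType) (n : nat) (theta : 'M[R]_n) (i j : 'I_n) : R[i] :=
  (cos (2 * pi * theta i j)) +i* (sin (2 * pi * theta i j)).

Record is_hilbert (R : realType) (H : lmodType R[i]) (ip : H -> H -> R[i]) : Prop := {
  ip_linl : forall (a : R[i]) (x y z : H), ip (a *: x + y) z = a * ip x z + ip y z;
  ip_conj : forall x y : H, ip x y = (ip y x)^*;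
  ip_ge0 : forall x : H, 0 <= ip x x;
  ip_eq0 : forall x : H, ip x x = 0 -> x = 0;
  ip_complete : forall u : nat -> H,
      (forall e : R[i], 0 < e -> exists N : nat, forall m k : nat,
          (N <= m)%N -> (N <= k)%N -> ip (u m - u k) (u m - u k) < e) ->
      exists x : H, forall e : R[i], 0 < e -> exists N : nat, forall m : nat,
          (N <= m)%N -> ip (u m - x) (u m - x) < e
}.

Definition is_bounded_op (R : realType) (H : lmodType R[i]) (ip : H -> H -> R[i])
    (T : H -> H) : Prop :=
  (forall (a : R[i]) (x y : H), T (a *: x + y) = a *: T x + T y) /\
  exists M : R[i], forall x : H, ip (T x) (T x) <= M * ip x x.

Definition is_adjoint (R : realType) (H : lmodType R[i]) (ip : H -> H -> R[i])
    (T S : H -> H) : Prop :=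
  forall x y : H, ip (T x) y = ip x (S y).

(** For a fixed column k, (R2) and (R3) give the resolutions of the identity
    [sum_m U_mk U_mk^* = 1 = sum_m U_mk^* U_mk], and (R4), (R5) make their
    summands mutually orthogonal.  Inserting the first resolution to the right
    of [U_ik^* U_jl] and rewriting with (R1), every summand with [m <> i] dies,
    while the summand [m = i] becomes [w_ij w_lk U_ik^* U_ik U_jl U_ik^*];
    inserting the second resolution to the left of [U_jl U_ik^*] shows in the
    same way that [U_ik^* U_ik] acts as the identity there.  For [m = j] the
    vanishing summand [t] only comes out of (R1) as [t + w_jj t = 0], hence
    [t = 0] because [w_jj = 1] and the scalars have characteristic 0. *)
From HB Require Import structures.
From mathcomp Require Import all_boot all_order all_algebra.
From mathcomp Require Import complex.
From mathcomp Require Import all_classical all_reals all_analysis.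
Import Order.TTheory GRing.Theory Num.Theory.
Local Open Scope ring_scope.
Local Open Scope complex_scope.
Set Implicit Arguments. Unset Strict Implicit.

Section LinearFunctions.
Variables (K : pzRingType) (V : lmodType K) (f : V -> V).
Hypothesis f_lin : linear f.

Let f_linear : {linear V -> V} := HB.pack f (GRing.isLinear.Build _ _ _ _ f f_lin).

Lemma linear_fun0 : f 0 = 0.
Proof. exact: (raddf0 f_linear). Qed.

Lemma linear_funD x y : f (x + y) = f x + f y.
Proof. exact: (raddfD f_linear). Qed.

Lemma linear_funZ a x : f (a *: x) = a *: f x.
Proof. exact: (linearZ_LR f_linear). Qed.

Lemma linear_fun_sum (I : finType) (F : I -> V) : f (\sum_m F m) = \sum_m f (F m).
Proof. exact: (raddf_sum f_linear). Qed.

End LinearFunctions.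

Lemma addr_self_eq0 (K : numFieldType) (V : lmodType K) (t : V) :
  t + t = 0 -> t = 0.
Proof.
rewrite -mulr2n -scaler_nat => /eqP; rewrite scaler_eq0 pnatr_eq0 /=.
by move/eqP.
Qed.

Section Adjoint.
Variables (R : realType) (H : lmodType R[i]) (ip : H -> H -> R[i]).
Hypothesis ip_hilbert : is_hilbert ip.

Lemma ip_linr (b : R[i]) (w u v : H) : ip w (b *: u + v) = b^* * ip w u + ip w v.
Proof.
rewrite (ip_conj ip_hilbert) (ip_linl ip_hilbert) rmorphD rmorphM /=.
by rewrite -!(ip_conj ip_hilbert).
Qed.

Lemma adjoint_linear (T S : H -> H) : is_adjoint ip T S -> linear S.
Proof.
move=> TS a y z; set d := S (a *: y + z) - (a *: S y + S z).
suff ip_d0 u : ip u d = 0 by apply/subr0_eq/(ip_eq0 ip_hilbert).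
rewrite /d -scaleN1r addrC !ip_linr -!TS ip_linr.
by rewrite rmorphN rmorph1 mulN1r addNr.
Qed.

End Adjoint.

Lemma omega_diag (R : realType) (n : nat) (theta : 'M[R]_n) (m : 'I_n) :
  theta^T = - theta -> omega theta m m = 1.
Proof.
move=> /(congr1 (fun M : 'M[R]_n => M m m)); rewrite !mxE => /eqP.
rewrite -subr_eq0 opprK -mulr2n mulrn_eq0 /= => /eqP theta_mm.
by rewrite /omega theta_mm mulr0 cos0 sin0.
Qed.

Section ColumnRelations.
Variables (K : numFieldType) (V : lmodType K) (n : nat).
Variables (w : 'I_n -> 'I_n -> K) (U Us : 'I_n -> 'I_n -> V -> V).

Hypothesis U_lin : forall a b, linear (U a b).
Hypothesis Us_lin : forall a b, linear (Us a b).

Hypothesis w_diag : forall m, w m m = 1.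
Hypothesis R1 : forall i j k l x,
  U i k (U j l x) + w j i *: U j k (U i l x)
  = w k l *: U i l (U j k x) + (w j i * w k l) *: U j l (U i k x).
Hypothesis R2_diag : forall k x, \sum_m U m k (Us m k x) = x.
Hypothesis R3_diag : forall k x, \sum_m Us m k (U m k x) = x.
Hypothesis R4 : forall i j k x, i != j -> U j k (Us i k x) = 0.
Hypothesis R5 : forall i j k x, i != j -> Us i k (U j k x) = 0.

Lemma Ustar_U_proj_eq0 i j k l m x : i != j -> m != i ->
  Us i k (U j l (U m k (Us m k x))) = 0.
Proof.
move=> ij mi; have im : i != m by rewrite eq_sym.
have := congr1 (Us i k) (R1 j m l k (Us m k x)).
rewrite !(linear_funD (Us_lin _ _)) !(linear_funZ (Us_lin _ _)).
rewrite (R5 _ _ ij) (R5 _ _ im) !scaler0 addr0.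
have [->|mj] := eqVneq m j; first by rewrite w_diag scale1r; exact: addr_self_eq0.
by rewrite (R4 _ _ mj) (linear_fun0 (U_lin _ _)) (linear_fun0 (Us_lin _ _)) scaler0 addr0.
Qed.

Lemma proj_U_Ustar_eq0 i j k l m x : i != j -> m != i ->
  Us m k (U m k (U j l (Us i k x))) = 0.
Proof.
move=> ij mi; have im : i != m by rewrite eq_sym.
have := R1 m j k l (Us i k x).
rewrite (R4 _ _ ij) (R4 _ _ im) !(linear_fun0 (U_lin _ _)) !scaler0 addr0.
move=> /(congr1 (Us m k)).
rewrite (linear_fun0 (Us_lin _ _)) (linear_funD (Us_lin _ _)) (linear_funZ (Us_lin _ _)).
have [->|mj] := eqVneq m j; first by rewrite w_diag scale1r; exact: addr_self_eq0.
by rewrite (R5 _ _ mj) scaler0 addr0.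
Qed.

Lemma Ustar_U_proj_self i j k l x : i != j ->
  Us i k (U j l (U i k (Us i k x)))
  = (w i j * w l k) *: Us i k (U i k (U j l (Us i k x))).
Proof.
move=> ij; have := congr1 (Us i k) (R1 j i l k (Us i k x)).
rewrite (R4 _ _ ij) (linear_fun0 (U_lin _ _)) scaler0 addr0 => ->.
rewrite (linear_funD (Us_lin _ _)) !(linear_funZ (Us_lin _ _)).
by rewrite (R5 _ _ ij) scaler0 add0r.
Qed.

Lemma Ustar_U_expand i j k l x : i != j ->
  Us i k (U j l x) = Us i k (U j l (U i k (Us i k x))).
Proof.
move=> ij; rewrite -{1}[x](R2_diag k).
rewrite (linear_fun_sum (U_lin _ _)) (linear_fun_sum (Us_lin _ _)).
rewrite (bigD1 i) //= big1 ?addr0 // => m mi.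
exact: Ustar_U_proj_eq0.
Qed.

Lemma Ustar_U_cancel i j k l x : i != j ->
  Us i k (U i k (U j l (Us i k x))) = U j l (Us i k x).
Proof.
move=> ij; rewrite -[RHS](R3_diag k) (bigD1 i) //= big1 ?addr0 // => m mi.
exact: proj_U_Ustar_eq0.
Qed.

Lemma Ustar_U_comm i j k l x : i != j ->
  Us i k (U j l x) = (w i j * w l k) *: U j l (Us i k x).
Proof.
by move=> ij; rewrite Ustar_U_expand // Ustar_U_proj_self // Ustar_U_cancel.
Qed.

End ColumnRelations.

Theorem proposition3p17 (R : realType) (n : nat) (theta : 'M[R]_n)
    (H : lmodType R[i]) (ip : H -> H -> R[i])
    (U Us : 'I_n -> 'I_n -> H -> H) :
  (2 <= n)%N ->
  theta^T = - theta ->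
  is_hilbert ip ->
  (forall i k, is_bounded_op ip (U i k)) ->
  (forall i k, is_adjoint ip (U i k) (Us i k)) ->
  (* (R1) *)
  (forall i j k l (x : H),
      U i k (U j l x) + omega theta j i *: U j k (U i l x)
      = omega theta k l *: U i l (U j k x)
        + (omega theta j i * omega theta k l) *: U j l (U i k x)) ->
  (* (R2) *)
  (forall k l (x : H), \sum_i U i k (Us i l x) = (k == l)%:R *: x) ->
  (* (R3) *)
  (forall k l (x : H), \sum_i Us i l (U i k x) = (k == l)%:R *: x) ->
  (* (R4) *)
  (forall i j k (x : H), i != j -> U j k (Us i k x) = 0) ->
  (* (R5) *)
  (forall i j k (x : H), i != j -> Us i k (U j k x) = 0) ->
  forall i j k l, i != j -> k != l ->
    forall x : H,
      Us i k (U j l x) = (omega theta i j * omega theta l k) *: U j l (Us i k x).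
Proof.
move=> _ skew hilbert U_bounded U_adj R1 R2 R3 R4 R5 i j k l ij _ x.
apply: (@Ustar_U_comm _ _ _ (omega theta) U Us) => //.
- by move=> a b; exact: (U_bounded a b).1.
- by move=> a b c y z; exact: (adjoint_linear hilbert (U_adj a b)) c y z.
- by move=> m; exact: omega_diag.
- by move=> k' y; rewrite /= R2 eqxx scale1r.
- by move=> k' y; rewrite /= R3 eqxx scale1r.
Qed.
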